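(* Let $G$ be a group of order $16p$, where $p$ is an odd prime, let $P$ be a Sylow $p$-subgroup of $G$ and assume $P \trianglelefteq G$, and let $Q$ be a Sylow $2$-subgroup of $G$. Then $G = Q \ltimes P$. Moreover, if the commutator subgroup $G'$ is not a cyclic group of prime-power order (the trivial group counting as having prime-power order), then: $Q$ is nonabelian, $Q$ acts nontrivially on $P$ by conjugation, and $G' = Q' \times P$ is cyclic.
   Context: $G'=[G,G]$ denotes the commutator subgroup of $G$, and $Q'$ that of $Q$. *)

From mathcomp Require Import all_boot all_fingroup all_solvable.
Set Implicit Arguments.
Unset Strict Implicit.
Unset Printing Implicit Defensive.

From mathcomp Require Import all_boot all_fingroup all_solvable.
Set Implicit Arguments.
Unset Strict Implicit.
Unset Printing Implicit Defensive.
Local Open Scope group_scope.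

(** Since P and Q have coprime orders p and 16, G = P ><| Q, hence G' lies in
    Q'P. As Aut(P) is abelian, G' centralizes P, so Q'P = Q' \x P is cyclic
    once Q' is. Every group Q of order 16 has cyclic derived subgroup: the only
    nontrivial case is |Q'| = |Q : Q'| = 4 with both Q' and Q/Q' of exponent 2,
    where Q = <x, y> and a case split on whether x^2 is central shows that
    [x, y] commutes with x and y, so Q' = <[x, y]>.
    If Q centralizes P, G' lies in Q; if Q is abelian, G' lies in P.
    Otherwise [P, Q] is a nontrivial subgroup of P of prime order, so
    P = [P, Q] lies in G' and G' = Q' \x P. *)

Section PrimeSquare.

Variable p : nat.
Hypothesis pr_p : prime p.

Lemma expg_p2group_noncyclic (gT : finGroupType) (H : {group gT}) x :
  #|H| = (p ^ 2)%N -> ~~ cyclic H -> x \in H -> x ^+ p = 1.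
Proof.
move=> oH ncycH Hx; apply/eqP; rewrite -order_dvdn.
have /(dvdn_pfactor _ _ pr_p)[m le_m2 ox] : #[x] %| p ^ 2 by rewrite -oH order_dvdG.
have lt_m2 : m < 2.
  rewrite ltn_neqAle le_m2 andbT; apply: contraNneq ncycH => m2; apply/cyclicP.
  by exists x; apply/eqP; rewrite eq_sym eqEcard cycle_subG Hx -orderE ox m2 oH /=.
by rewrite ox -{2}(expn1 p) dvdn_exp2l.
Qed.

Lemma sub_p2group_eq_of_proper (gT : finGroupType) (A B C : {group gT}) :
  #|C| %| p ^ 2 -> B \subset C -> A \proper B -> A :!=: 1 -> B :=: C.
Proof.
move=> oC sBC ltAB ntA; have p_gt1 := prime_gt1 pr_p.
have /(dvdn_pfactor _ _ pr_p)[mB le_mB2 oB] := dvdn_trans (cardSg sBC) oC.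
have /(dvdn_pfactor _ _ pr_p)[mA _ oA] :=
  dvdn_trans (cardSg (proper_sub ltAB)) (dvdn_trans (cardSg sBC) oC).
have ltAB' := proper_card ltAB; have ntA' : 1 < #|A| by rewrite cardG_gt1.
rewrite oA oB ltn_exp2l // in ltAB'.
rewrite oA -{1}(expn0 p) ltn_exp2l // in ntA'.
have mB2 : mB = 2 by apply/eqP; rewrite eqn_leq le_mB2; apply: leq_ltn_trans ltAB'.
by apply/eqP; rewrite eqEcard sBC oB mB2 dvdn_leq ?expn_gt0 ?prime_gt0.
Qed.

Lemma pgroup_quotient_der1_gen (gT : finGroupType) (Q H : {group gT}) :
  p.-group Q -> H \subset Q -> Q / Q^`(1) \subset H / Q^`(1) -> H :=: Q.
Proof.
move=> pQ sHQ sQHq; have nQ'Q := der_norm 1 Q.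
suff defQ : 'Phi(Q) <*> H = Q by rewrite -(Phi_nongen defQ) genGid.
have sQ'PhiH : Q^`(1) \subset 'Phi(Q) <*> H.
  by rewrite (Phi_joing pQ) -joingA joing_subl.
apply/eqP; rewrite eqEsubset join_subG Phi_sub sHQ /= -(quotientSGK nQ'Q sQ'PhiH).
by rewrite (subset_trans sQHq) ?quotientS ?joing_subr.
Qed.

Lemma pgroup_quotient_der1_p2_gen (gT : finGroupType) (Q : {group gT}) :
  p.-group Q -> #|Q / Q^`(1)| = (p ^ 2)%N ->
  exists x y, [/\ x \in Q, y \in Q & <[x]> <*> <[y]> = Q].
Proof.
move=> pQ oQq; have ntQq : Q / Q^`(1) != 1.
  by rewrite -cardG_gt1 oQq (ltn_exp2l 0 2 (prime_gt1 pr_p)).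
have [_ /morphimP[x _ Qx ->] ntX] := trivgPn _ ntQq.
have [Y qY sQqXY] :
    exists2 Y, Y \in Q / Q^`(1) & Q / Q^`(1) \subset <[coset Q^`(1) x]> <*> <[Y]>.
  set X := coset Q^`(1) x.
  have [sQqX | /subsetPn[Y qY notXY]] := boolP (Q / Q^`(1) \subset <[X]>).
    by exists X; rewrite ?mem_quotient // (subset_trans sQqX) ?joing_subl.
  exists Y => //.
  have sXYq : <[X]> <*> <[Y]> \subset Q / Q^`(1).
    by rewrite join_subG !cycle_subG qY mem_quotient.
  have ltXY : <[X]> \proper <[X]> <*> <[Y]>.
    apply/properP; split; first exact: joing_subl.
    by exists Y => //; apply: subsetP (joing_subr _ _) _ (cycle_id Y).
  by rewrite (sub_p2group_eq_of_proper _ sXYq ltXY) ?oQq ?cycle_eq1.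
have [y _ Qy defY] := morphimP qY.
exists x, y; split=> //; apply: pgroup_quotient_der1_gen pQ _ _.
  by rewrite join_subG !cycle_subG Qx Qy.
rewrite (subset_trans sQqXY) // defY join_subG !cycle_subG.
by rewrite !mem_quotient ?mem_gen ?inE ?cycle_id ?orbT.
Qed.

End PrimeSquare.

Section Exponent2Commutators.

Variables (gT : finGroupType) (Q : {group gT}).
Hypotheses (pQ : 2.-group Q) (sqrQ : {in Q, forall x, x ^+ 2 \in Q^`(1)})
  (sqrQ' : {in Q^`(1), forall a, a ^+ 2 = 1}) (oQ' : #|Q^`(1)| %| 2 ^ 2).

Lemma commute_commg_l x y : x \in Q -> y \in Q -> commute [~ x, y] x.
Proof.
move=> Qx Qy; have Q'xy : [~ x, y] \in Q^`(1) by rewrite derg1 mem_commg.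
have [Zx2 | notZx2] := boolP (x ^+ 2 \in 'Z(Q)).
  (* 1 = [x ^+ 2, y] = [x, y] ^ x * [x, y], and [x, y] is an involution. *)
  have /mulg1_eq xyJx : [~ x, y] ^ x * [~ x, y] = 1.
    rewrite -commMgJ -expg2; apply/eqP/commgP.
    by move/setIP: Zx2 => [_ /centP]; apply.
  have /mulg1_eq xyV : [~ x, y] * [~ x, y] = 1 by rewrite -expg2 sqrQ'.
  by apply/commgP/conjg_fixP/invg_inj; rewrite xyJx xyV.
have ntQ' : Q^`(1) != 1.
  by apply: contraNneq notZx2 => Q'1; move: (sqrQ Qx); rewrite Q'1 inE => /eqP->.
have [z /setIP[Q'z Zz] ntz] :=
  trivgPn _ (meet_center_nil (pgroup_nil pQ) (der_normal 1 Q) ntQ').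
(* z is central and x ^+ 2 is not, so <[z]> is properly contained in the centralizer. *)
have sCQ' : 'C_(Q^`(1))[x] \subset Q^`(1) := subsetIl _ _.
have ltzC : <[z]> \proper 'C_(Q^`(1))[x].
  apply/properP; split.
    by rewrite cycle_subG inE Q'z; apply/cent1P; move/setIP: Zz => [_ /centP]; apply.
  exists (x ^+ 2); first by rewrite inE sqrQ //; apply/cent1P/commute_sym/commuteX.
  by apply: contra notZx2; apply: subsetP; rewrite cycle_subG.
have /setIP[_ /cent1P] : [~ x, y] \in 'C_(Q^`(1))[x].
  by rewrite (sub_p2group_eq_of_proper (isT : prime 2) oQ' sCQ' ltzC) ?cycle_eq1.
by [].
Qed.

End Exponent2Commutators.

Lemma der1_cyclic_index4 (gT : finGroupType) (Q : {group gT}) :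
  2.-group Q -> #|Q / Q^`(1)| = 4 -> ~~ cyclic (Q / Q^`(1)) -> #|Q^`(1)| = 4 ->
  cyclic Q^`(1).
Proof.
move=> pQ oQq ncQq oQ'; have [// | ncQ'] := boolP (cyclic Q^`(1)).
have sqrQ : {in Q, forall x, x ^+ 2 \in Q^`(1)}.
  move=> x Qx; have nQ'x := subsetP (der_norm 1 Q) x Qx.
  apply: coset_idr; first by rewrite groupX.
  rewrite morphX //; apply: (expg_p2group_noncyclic (isT : prime 2) oQq ncQq).
  by rewrite mem_quotient.
have sqrQ' : {in Q^`(1), forall a, a ^+ 2 = 1}.
  by move=> a; apply: (expg_p2group_noncyclic (isT : prime 2) oQ' ncQ').
have [x [y [Qx Qy defQ]]] := pgroup_quotient_der1_p2_gen (isT : prime 2) pQ oQq.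
have oQ'4 : #|Q^`(1)| %| 2 ^ 2 by rewrite oQ'.
have commute_commg := commute_commg_l pQ sqrQ sqrQ' oQ'4.
have cXYxy : [~ x, y] \in 'C(<[x]> <*> <[y]>).
  rewrite centY !cent_cycle inE; apply/andP; split; apply/cent1P; first exact: commute_commg.
  by rewrite -invg_comm; apply/commute_sym/commuteV/commute_sym/commute_commg.
by move: ncQ'; rewrite -defQ der1_joing_cycles ?cycle_cyclic.
Qed.

Lemma der1_cyclic_card16 (gT : finGroupType) (Q : {group gT}) :
  #|Q| = 16 -> cyclic Q^`(1).
Proof.
move=> oQ; have pQ : 2.-group Q by rewrite /pgroup oQ.
have [cycQq | ncQq] := boolP (cyclic (Q / Q^`(1))).
  exact: cyclicS (der_sub 1 Q) (cyclic_nilpotent_quo_der1_cyclic (pgroup_nil pQ) cycQq).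
have oQq_gt3 : 3 < #|Q / Q^`(1)| by rewrite ltnNge; apply: contra ncQq; apply: cyclic_small.
have oQ'Qq : (#|Q^`(1)| * #|Q / Q^`(1)|)%N = 16.
  by rewrite card_quotient ?der_norm // Lagrange ?der_sub.
have /(dvdn_pfactor _ _ (isT : prime 2))[m _ oQ'] : #|Q^`(1)| %| 2 ^ 4.
  by rewrite -[(2 ^ 4)%N]/16 -oQ cardSg ?der_sub.
case: m oQ' => [|[|[|m]]] oQ'; try by rewrite cyclic_small ?oQ'.
  apply: der1_cyclic_index4 => //; apply/eqP.
  by rewrite -(eqn_pmul2l (cardG_gt0 Q^`(1))) oQ'Qq oQ'.
have oQ'_ge8 : 8 <= #|Q^`(1)| by rewrite oQ' -[8]/(2 ^ 3)%N leq_exp2l.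
by have := leq_mul oQ'_ge8 oQq_gt3; rewrite oQ'Qq.
Qed.

Lemma der1_sub_cent_cyclic (gT : finGroupType) (G K : {group gT}) :
  K <| G -> cyclic K -> G^`(1) \subset 'C(K).
Proof.
move=> /andP[_ nKG] cycK; have nKG' := subset_trans (der_sub 1 G) nKG.
rewrite -(ker_conj_aut K) ker_trivg_morphim nKG' morphim_der //.
by rewrite (derG1P (abelianS (Aut_conj_aut K G) (Aut_cyclic_abelian cycK))) sub1G.
Qed.

Lemma der1_sub_sdprod (gT : finGroupType) (G K H : {group gT}) :
  K ><| H = G -> G^`(1) \subset H^`(1) <*> K.
Proof.
case/sdprod_context=> /andP[_ nKG] _ defG nKH _.
rewrite -(quotientSGK (subset_trans (der_sub 1 G) nKG) (joing_subr _ _)).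
rewrite quotient_der // -defG quotientMidl -quotient_der //.
exact/quotientS/joing_subl.
Qed.

Section Order16p.

Variables (gT : finGroupType) (G P Q : {group gT}) (p : nat).
Hypotheses (pr_p : prime p) (odd_p : odd p) (oG : #|G| = (16 * p)%N).
Hypotheses (sylP : p.-Sylow(G) P) (nsPG : P <| G) (sylQ : 2.-Sylow(G) Q).

Fact coprime_16_p : coprime 16 p.
Proof. by rewrite -[16]/(2 ^ 4)%N coprimeXl ?coprime2n. Qed.

Lemma card_Sylow_odd : #|P| = p.
Proof.
rewrite (card_Hall sylP) oG (partnM _ (isT : 0 < 16) (prime_gt0 pr_p)).
rewrite (part_pnat_id (pnat_id pr_p)).
by rewrite part_p'nat ?mul1n // p'natE // -prime_coprime // coprime_sym coprime_16_p.
Qed.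

Lemma card_Sylow_2 : #|Q| = 16.
Proof.
rewrite (card_Hall sylQ) oG (partnM _ (isT : 0 < 16) (prime_gt0 pr_p)) part_pnat_id //.
by rewrite part_p'nat ?muln1 // p'natE // -prime_coprime // coprime2n.
Qed.

Lemma sdprod_Sylow : P ><| Q = G.
Proof.
have coPQ : coprime #|P| #|Q|.
  by rewrite card_Sylow_odd card_Sylow_2 coprime_sym coprime_16_p.
rewrite sdprodE ?coprime_TIg ?(subset_trans (pHall_sub sylQ)) ?normal_norm //.
apply/eqP; rewrite eqEcard mul_subG ?(pHall_sub sylP) ?(pHall_sub sylQ) //=.
by rewrite TI_cardMg ?coprime_TIg // card_Sylow_odd card_Sylow_2 oG mulnC.
Qed.

Fact cyclic_Sylow_odd : cyclic P.
Proof. by rewrite prime_cyclic ?card_Sylow_odd. Qed.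

Lemma der1_sub_join : G^`(1) \subset Q^`(1) <*> P.
Proof. exact: der1_sub_sdprod sdprod_Sylow. Qed.

Fact coprime_der1_Sylow : coprime #|Q^`(1)| #|P|.
Proof.
rewrite card_Sylow_odd (coprime_dvdl (cardSg (der_sub 1 Q))) //.
by rewrite card_Sylow_2 coprime_16_p.
Qed.

Lemma dprod_der1_Sylow_odd : Q^`(1) \x P = Q^`(1) <*> P.
Proof.
have cG'P : G^`(1) \subset 'C(P) := der1_sub_cent_cyclic nsPG cyclic_Sylow_odd.
have sQ'G' : Q^`(1) \subset G^`(1) := dergS 1 (pHall_sub sylQ).
rewrite dprodEY ?coprime_TIg ?coprime_der1_Sylow //.
by rewrite centsC (subset_trans sQ'G').
Qed.

Lemma cyclic_der1 : cyclic G^`(1).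
Proof.
have cycQ' : cyclic Q^`(1) := der1_cyclic_card16 card_Sylow_2.
apply: cyclicS der1_sub_join _.
by rewrite (cyclic_dprod dprod_der1_Sylow_odd) ?cyclic_Sylow_odd ?coprime_der1_Sylow.
Qed.

Lemma der1_sub_Sylow_odd_of_abelian : abelian Q -> G^`(1) \subset P.
Proof. by move/derG1P=> Q'1; have := der1_sub_join; rewrite Q'1 joing1G. Qed.

Lemma der1_sub_Sylow_2_of_cent : Q \subset 'C(P) -> G^`(1) \subset Q.
Proof.
move=> cQP; have [_ _ _ _ tiPQ] := sdprod_context sdprod_Sylow.
have sdG : Q ><| P = G.
  by rewrite sdprodE ?cents_norm 1?centsC // ?(sdprodWC sdprod_Sylow) // setIC.
have := der1_sub_sdprod sdG.
by rewrite (derG1P (cyclic_abelian cyclic_Sylow_odd)) joing1G.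
Qed.

Lemma Sylow_odd_sub_der1 : ~~ (Q \subset 'C(P)) -> P \subset G^`(1).
Proof.
move=> not_cQP.
have sRP : [~: P, Q] \subset P.
  by rewrite commg_subl (subset_trans (pHall_sub sylQ) (normal_norm nsPG)).
have sRG' : [~: P, Q] \subset G^`(1).
  by rewrite derg1 commgSS ?(pHall_sub sylP) ?(pHall_sub sylQ).
have prP : prime #|P| by rewrite card_Sylow_odd.
have [sPR | ] := prime_subgroupVti [~: P, Q] prP.
  exact: subset_trans sPR sRG'.
by rewrite (setIidPl sRP) => /commG1P; rewrite centsC (negPf not_cQP).
Qed.

Lemma dprod_der1 : ~~ (Q \subset 'C(P)) -> Q^`(1) \x P = G^`(1).
Proof.
move=> not_cQP; rewrite dprod_der1_Sylow_odd; apply/eqP.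
by rewrite eqEsubset der1_sub_join join_subG dergS ?(pHall_sub sylQ) ?Sylow_odd_sub_der1.
Qed.

End Order16p.

Theorem mainTheorem11 (gT : finGroupType) (G P Q : {group gT}) (p : nat) :
  prime p -> odd p -> #|G| = (16 * p)%N ->
  P \in 'Syl_p(G) -> P <| G -> Q \in 'Syl_2(G) ->
  P ><| Q = G /\
  (~ (cyclic G^`(1) /\ exists q : nat, prime q /\ q.-group G^`(1)) ->
     [/\ ~~ abelian Q, ~~ (Q \subset 'C(P)),
         Q^`(1) \x P = G^`(1) & cyclic G^`(1)]).
Proof.
move=> pr_p odd_p oG; rewrite !inE => sylP nsPG sylQ.
split=> [|not_cyclic_qgroup]; first exact: sdprod_Sylow pr_p odd_p oG sylP nsPG sylQ.
have cycG' := cyclic_der1 pr_p odd_p oG sylP nsPG sylQ.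
have not_cQP : ~~ (Q \subset 'C(P)).
  apply/negP=> /(der1_sub_Sylow_2_of_cent pr_p odd_p oG sylP nsPG sylQ) sG'Q.
  apply: not_cyclic_qgroup; split=> //; exists 2; split=> //.
  exact: pgroupS sG'Q (pHall_pgroup sylQ).
have not_abQ : ~~ abelian Q.
  apply/negP=> /(der1_sub_Sylow_odd_of_abelian pr_p odd_p oG sylP nsPG sylQ) sG'P.
  apply: not_cyclic_qgroup; split=> //; exists p; split=> //.
  exact: pgroupS sG'P (pHall_pgroup sylP).
by split=> //; apply: dprod_der1 pr_p odd_p oG sylP nsPG sylQ not_cQP.
Qed.
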